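(* Let $H$ be a red-blue colouring of $K_n$ satisfying $\mathrm{pack}(H) \le n^2/4$. Let $\{X_1, X_2\}$ be a partition of $V(H)$ with at most $(n-2)/6$ blue edges having both ends in $X_1$ or both ends in $X_2$. Then $n/2 - \sqrt{n} \le |X_i| \le n/2 + \sqrt{n}$ for $i \in [2]$.
   Context: A red-blue colouring $H$ of $K_n$ assigns red or blue to each edge of the complete graph on the $n$-vertex set $V(H)$; $H_R, H_B$ are the spanning subgraphs of red and blue edges. For a graph $F$, a fractional triangle packing is a function $\omega$ from the triangles of $F$ to $[0,1]$ with $\sum_{T \ni e}\omega(T) \le 1$ for every edge $e$; $\nu^*(F)$ is the maximum of $\sum_T\omega(T)$; $\mathrm{pack}(H) = 3(\nu^*(H_R)+\nu^*(H_B))$. *)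

From HB Require Import structures.
From mathcomp Require Import all_boot all_order all_algebra.
From mathcomp Require Import all_classical all_reals.
Set Implicit Arguments. Unset Strict Implicit. Unset Printing Implicit Defensive.
Import Order.TTheory GRing.Theory Num.Theory.
Local Open Scope ring_scope.


Section Defs.
Variable T : finType.

(* A red-blue colouring of the complete graph on vertex set T assigns to each
   2-subset {x,y} (x <> y) a colour: [col e = true] means red, false means blue.
   Values of [col] on sets that are not of size 2 are irrelevant. *)

Definition red_graph (col : {set T} -> bool) : rel T :=
  fun x y => (x != y) && col ([set x; y])%SET.
Definition blue_graph (col : {set T} -> bool) : rel T :=
  fun x y => (x != y) && ~~ col ([set x; y])%SET.

Definition is_clique (G : rel T) (A : {set T}) : bool :=
  [forall x in A, forall y in A, (x != y) ==> G x y].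

Definition is_edge (G : rel T) (e : {set T}) : bool := (#|e| == 2)%N && is_clique G e.
Definition is_triangle (G : rel T) (t : {set T}) : bool := (#|t| == 3)%N && is_clique G t.

Variable R : realType.

Definition frac_triangle_packing (G : rel T) (w : {set T} -> R) : Prop :=
  (forall t, is_triangle G t -> 0 <= w t <= 1) /\
  (forall e, is_edge G e -> \sum_(t | is_triangle G t && (e \subset t)) w t <= 1).

Definition packing_value (G : rel T) (w : {set T} -> R) : R :=
  \sum_(t | is_triangle G t) w t.

Definition nu_star (G : rel T) : R :=
  sup ([set s : R | exists w, frac_triangle_packing G w /\ s = packing_value G w])%classic.

Definition pack (col : {set T} -> bool) : R :=
  3 * (nu_star (red_graph col) + nu_star (blue_graph col)).

Definition blue_inside (col : {set T} -> bool) (X1 X2 : {set T}) : nat :=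
  #|[set e : {set T} | is_edge (blue_graph col) e && ((e \subset X1) || (e \subset X2))]|.

End Defs.

From mathcomp Require Import all_boot all_order all_algebra.
From mathcomp Require Import reals.
From mathcomp Require Import lra zify.
Import Order.TTheory GRing.Theory Num.Theory.
Set Implicit Arguments. Unset Strict Implicit. Unset Printing Implicit Defensive.

(* Weight every red triangle inside X_i by 1/(|X_i| - 2). An edge inside X_i lies
   in |X_i| - 2 triangles of X_i, so this is a fractional triangle packing of H_R
   and pack(H) >= 3 (r_1/(|X_1| - 2) + r_2/(|X_2| - 2)), where r_i counts the red
   triangles inside X_i. A triangle that is not red contains a blue edge, so
   r_i >= C(|X_i|, 3) - k_i (|X_i| - 2) with k_i the number of blue edges inside
   X_i. This gives pack(H) >= |X_1|(|X_1| - 1)/2 + |X_2|(|X_2| - 1)/2 - 3 (k_1 + k_2),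
   and comparing with n^2/4 yields (|X_1| - n/2)^2 <= n. *)

Section Counting.
Variables (T : finType) (col : {set T} -> bool).

Definition red_triangles_in (A : {set T}) : {set {set T}} :=
  [set t | is_triangle (red_graph col) t && (t \subset A)].

Definition blue_edges_in (A : {set T}) : {set {set T}} :=
  [set e | is_edge (blue_graph col) e && (e \subset A)].

Definition triples_through (e A : {set T}) : {set {set T}} :=
  [set t : {set T} | (#|t| == 3) && (e \subset t) && (t \subset A)].

Lemma card_triples_through (e A : {set T}) :
  #|e| = 2 -> #|triples_through e A| <= (e \subset A) * (#|A| - 2).
Proof.
move=> ce; have [eA | /negP neA] := boolP (e \subset A); last first.
  rewrite (_ : triples_through e A = set0) ?cards0 //; apply/setP => t; rewrite !inE.
  by apply/negP => /andP[/andP[_ et] tA]; apply: neA; apply: subset_trans tA.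
have -> : #|A| - 2 = #|A :\: e| by rewrite cardsD (setIidPr eA) ce.
rewrite mul1n; apply: leq_trans (leq_imset_card (fun z => z |: e) _).
apply: subset_leq_card; apply/subsetP => t; rewrite inE => /andP[/andP[ct et] tA].
have : 0 < #|t :\: e| by rewrite cardsD (setIidPr et) ce (eqP ct).
case/card_gt0P => z; rewrite inE => /andP[ze zt].
apply/imsetP; exists z; first by rewrite inE ze (subsetP tA).
apply/eqP; rewrite eq_sym eqEcard subUset sub1set zt et /= (eqP ct).
by rewrite cardsU1 ze ce.
Qed.

Lemma non_red_triangle_blue_edge (t : {set T}) :
  #|t| = 3 -> ~~ is_triangle (red_graph col) t ->
  exists2 e, is_edge (blue_graph col) e & e \subset t.
Proof.
move=> ct; rewrite /is_triangle ct eqxx /= /is_clique.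
case/forallPn => x; rewrite negb_imply => /andP[xt].
case/forallPn => y; rewrite negb_imply => /andP[yt].
rewrite negb_imply => /andP[xy]; rewrite /red_graph xy /= => ncol.
exists [set x; y]; last by rewrite subUset !sub1set xt yt.
rewrite /is_edge cards2 xy /= /is_clique.
apply/forallP => u; apply/implyP => /set2P hu.
apply/forallP => v; apply/implyP => /set2P hv; apply/implyP => uv.
rewrite /blue_graph uv /=.
by case: hu hv uv => -> [] -> //; rewrite ?eqxx // setUC.
Qed.

Lemma binomial3_le_red_blue (A : {set T}) :
  'C(#|A|, 3) <= #|red_triangles_in A| + #|blue_edges_in A| * (#|A| - 2).
Proof.
set D := [set t : {set T} | t \subset A & #|t| == 3].
rewrite -cards_draws -/D -(cardsID (red_triangles_in A) D).
apply: leq_add; first by apply: subset_leq_card; apply: subsetIr.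
rewrite -sum1_card.
apply: (@leq_trans (\sum_(t in D :\: red_triangles_in A)
                      \sum_(e in blue_edges_in A) (e \subset t : nat))).
  apply: leq_sum => t; rewrite !inE => /andP[ntR /andP[tA ct]].
  have [|e be et] := non_red_triangle_blue_edge (eqP ct); first by rewrite tA andbT in ntR.
  have eB : e \in blue_edges_in A by rewrite inE be (subset_trans et tA).
  by rewrite (bigD1 e) //= et.
rewrite exchange_big /= -sum_nat_const.
apply: leq_sum => e; rewrite inE => /andP[be eA].
have ce : #|e| = 2 by case/andP: be => /eqP.
rewrite -big_mkcondr /= sum1_card.
have := card_triples_through A ce; rewrite eA mul1n; apply: leq_trans.
apply: subset_leq_card; apply/subsetP => t; rewrite !inE.
by rewrite unfold_in !inE => /andP[/andP[_ /andP[tA ->]] ->]; rewrite tA.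
Qed.

Lemma blue_inside_disjoint (X1 X2 : {set T}) : X1 :&: X2 = set0 ->
  blue_inside col X1 X2 = #|blue_edges_in X1| + #|blue_edges_in X2|.
Proof.
move=> X12; rewrite /blue_inside.
have -> : [set e | is_edge (blue_graph col) e && ((e \subset X1) || (e \subset X2))]
          = blue_edges_in X1 :|: blue_edges_in X2.
  by apply/setP => e; rewrite !inE andb_orr.
rewrite cardsU -[RHS]subn0; congr (_ - _); apply/eqP; rewrite cards_eq0.
apply/eqP/setP => e; rewrite !inE.
apply/negP => /andP[/andP[be e1] /andP[_ e2]].
have ce : #|e| = 2 by case/andP: be => /eqP.
have : e \subset X1 :&: X2 by rewrite subsetI e1 e2.
by rewrite X12 subset0 => /eqP e0; rewrite e0 cards0 in ce.
Qed.

End Counting.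

Local Open Scope ring_scope.

Section Packing.
Variables (R : realType) (T : finType).

Lemma packing_value_le_nu_star (G : rel T) (w : {set T} -> R) :
  frac_triangle_packing G w -> packing_value G w <= nu_star R G.
Proof.
move=> hw; apply: sup_upper_bound; last by exists w.
split; first by exists (packing_value G w), w.
exists (\sum_(t | is_triangle G t) (1 : R)) => _ [w' [[w'01 _] ->]].
by apply: ler_sum => t /w'01 /andP[].
Qed.

Lemma nu_star_ge0 (G : rel T) : 0 <= nu_star R G.
Proof.
have -> : 0 = packing_value G (fun=> 0 : R) by rewrite /packing_value big1.
apply: packing_value_le_nu_star; split => [t _|e _]; first by rewrite lexx ler01.
by rewrite big1.
Qed.

(* For #|A| <= 2 the truncated difference is 0 and 0^-1 = 0, so the weight vanishes. *)
Definition part_weight (A t : {set T}) : R :=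
  if t \subset A then ((#|A| - 2)%N%:R)^-1 else 0.

Lemma part_weight_ge0 (A t : {set T}) : 0 <= part_weight A t.
Proof. by rewrite /part_weight; case: ifP; rewrite ?invr_ge0. Qed.

Lemma part_weight_le1 (A t : {set T}) : part_weight A t <= 1.
Proof.
rewrite /part_weight; case: ifP => // _.
have [->|a2] := posnP (#|A| - 2); first by rewrite invr0.
by rewrite invf_le1 ?ltr0n // ler1n.
Qed.

Lemma sum_part_weight (P : pred {set T}) (A : {set T}) :
  \sum_(t | P t) part_weight A t
    = #|[set t | P t && (t \subset A)]|%:R / (#|A| - 2)%N%:R.
Proof.
rewrite -big_mkcondr /= sumr_const mulrC mulr_natr cardsE.
by congr (_ *+ #|_|); apply/eq_pred => t /=; rewrite inE.
Qed.

Lemma sum_part_weight_through (A e : {set T}) : #|e| = 2 ->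
  \sum_(t : {set T} | (#|t| == 3)%N && (e \subset t)) part_weight A t <= (e \subset A)%:R.
Proof.
move=> ce; rewrite sum_part_weight.
have -> : [set t : {set T} | (#|t| == 3)%N && (e \subset t) && (t \subset A)]
          = triples_through e A by [].
have [->|a2] := posnP (#|A| - 2); first by rewrite invr0 mulr0.
rewrite ler_pdivrMr ?ltr0n // -natrM ler_nat.
exact: card_triples_through.
Qed.

Lemma two_part_packing (col : {set T} -> bool) (X1 X2 : {set T}) :
  X1 :&: X2 = set0 ->
  frac_triangle_packing (red_graph col) (fun t => part_weight X1 t + part_weight X2 t).
Proof.
move=> X12.
have in_both (s : {set T}) : s \subset X1 -> s \subset X2 -> s = set0.
  by move=> s1 s2; apply/eqP; rewrite -subset0 -X12 subsetI s1 s2.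
split=> [t /andP[/eqP ct _] | e /andP[/eqP ce _]].
  rewrite addr_ge0 ?part_weight_ge0 //=.
  have [t1|t1] := boolP (t \subset X1); last first.
    by rewrite /part_weight (negbTE t1) add0r part_weight_le1.
  have w2 : part_weight X2 t = 0.
    rewrite /part_weight ifF //; apply/negP => t2.
    by move: ct; rewrite (in_both _ t1 t2) cards0.
  by rewrite w2 addr0 part_weight_le1.
apply: (@le_trans _ _ (\sum_(t : {set T} | (#|t| == 3)%N && (e \subset t))
                         (part_weight X1 t + part_weight X2 t))).
  rewrite [leLHS]big_mkcond [leRHS]big_mkcond /=; apply: ler_sum => t _.
  have [/andP[-> _] //|_] := boolP (is_triangle (red_graph col) t).
  by case: ifP; rewrite ?addr_ge0 ?part_weight_ge0.
rewrite big_split.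
apply: le_trans (lerD (sum_part_weight_through X1 ce) (sum_part_weight_through X2 ce)) _.
have [e1|_] := boolP (e \subset X1); last by rewrite add0r; case: (e \subset X2).
have [e2|_] := boolP (e \subset X2); last by rewrite addr0.
by move: ce; rewrite (in_both _ e1 e2) cards0.
Qed.

Definition red_share (col : {set T} -> bool) (A : {set T}) : R :=
  #|red_triangles_in col A|%:R / (#|A| - 2)%N%:R.

Lemma red_shares_le_pack (col : {set T} -> bool) (X1 X2 : {set T}) :
  X1 :&: X2 = set0 -> 3 * (red_share col X1 + red_share col X2) <= pack R col.
Proof.
move=> X12; rewrite /pack ler_pM2l // -[leLHS]addr0 lerD ?nu_star_ge0 //.
have -> : red_share col X1 + red_share col X2
          = packing_value (red_graph col) (fun t => part_weight X1 t + part_weight X2 t).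
  by rewrite /packing_value big_split !sum_part_weight.
exact/packing_value_le_nu_star/two_part_packing.
Qed.

End Packing.

Lemma bin3_mul6 (a : nat) : ('C(a, 3) * 6 = a * (a - 1) * (a - 2))%N.
Proof.
have := bin_ffact a 3; rewrite !ffactnS ffactn0 /= => ->.
rewrite -!subn1 muln1 mulnA; congr (_ * _ * _); lia.
Qed.

Lemma red_share_lower_bound (R : realFieldType) (a r k : nat) :
  (2 < a)%N -> ('C(a, 3) <= r + k * (a - 2))%N ->
  a%:R * (a%:R - 1) / 2 - 3 * k%:R <= 3 * (r%:R / (a - 2)%N%:R) :> R.
Proof.
move=> a2 hC; have d_gt0 : 0 < (a - 2)%N%:R :> R by rewrite ltr0n subn_gt0.
rewrite mulrA ler_pdivlMr //.
have := bin3_mul6 a; rewrite -(ler_nat R) natrD !natrM in hC.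
move=> /(congr1 (fun m => m%:R : R)); rewrite !natrM natrB ?(ltnW (ltnW a2)) //.
rewrite natrB ?(ltnW a2) // in hC d_gt0 *.
nra.
Qed.

Lemma natr_root_1_2 (R : realFieldType) (a : nat) :
  (0 < a)%N -> (a <= 2)%N -> (a%:R - 1) * (a%:R - 2) = 0 :> R.
Proof. by case: a => [|[|[|]]] //= _ _; rewrite ?subrr ?mul0r ?mulr0. Qed.

(* (a - n/2)^2 = a(a-1)/2 + b(b-1)/2 + n/2 - n^2/4 for n = a + b; a part of size
   at most 2 has a(a-1)/2 <= 1 and needs no triangle bound. *)
Lemma part_sizes_balanced (R : realFieldType) (a b k1 k2 : nat) (S1 S2 : R) :
  (0 < a)%N -> (0 < b)%N -> 0 <= S1 -> 0 <= S2 ->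
  ((2 < a)%N -> a%:R * (a%:R - 1) / 2 - 3 * k1%:R <= S1) ->
  ((2 < b)%N -> b%:R * (b%:R - 1) / 2 - 3 * k2%:R <= S2) ->
  S1 + S2 <= (a + b)%N%:R ^+ 2 / 4 -> (k1 + k2)%N%:R <= ((a + b)%N%:R - 2) / 6 :> R ->
  (a%:R - (a + b)%N%:R / 2) ^+ 2 <= (a + b)%N%:R :> R.
Proof.
move=> a0 b0 S1_ge0 S2_ge0 hS1 hS2 hS hk.
rewrite !natrD in hS hk *.
have k1_ge0 := ler0n R k1; have k2_ge0 := ler0n R k2.
have a1 : 1 <= a%:R :> R by rewrite ler1n.
have b1 : 1 <= b%:R :> R by rewrite ler1n.
case: (ltnP 2 a) => a2; case: (ltnP 2 b) => b2.
- have := hS1 a2; have := hS2 b2; nra.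
- have := hS1 a2; have := natr_root_1_2 R b0 b2; nra.
- have := hS2 b2; have := natr_root_1_2 R a0 a2; nra.
- have := natr_root_1_2 R a0 a2; have := natr_root_1_2 R b0 b2; nra.
Qed.

Lemma sqr_sub_le_sqrt (R : rcfType) (x c n : R) :
  (x - c) ^+ 2 <= n -> c - Num.sqrt n <= x <= c + Num.sqrt n.
Proof.
move=> /ler_wsqrtr; rewrite sqrtr_sqr ler_norml => /andP[lo hi].
by apply/andP; split; lra.
Qed.

Theorem proposition6p3 (R : realType) (T : finType) (col : {set T} -> bool)
  (X1 X2 : {set T}) :
  let n : R := #|T|%:R in
  pack R col <= n ^+ 2 / 4 ->
  (X1 != finset.set0)%SET -> (X2 != finset.set0)%SET -> (X1 :&: X2 = finset.set0)%SET -> (X1 :|: X2 = finset.setT)%SET ->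
  (blue_inside col X1 X2)%:R <= (n - 2) / 6 ->
  (n / 2 - Num.sqrt n <= #|X1|%:R <= n / 2 + Num.sqrt n) /\
  (n / 2 - Num.sqrt n <= #|X2|%:R <= n / 2 + Num.sqrt n).
Proof.
move=> n hpack X1_n0 X2_n0 X12 X1uX2 hblue.
have card_T : #|T| = (#|X1| + #|X2|)%N.
  by rewrite -cardsT -X1uX2 cardsU X12 cards0 subn0.
have [X1_gt0 X2_gt0] : (0 < #|X1|)%N /\ (0 < #|X2|)%N by rewrite !card_gt0.
have share_bound (A : {set T}) : (2 < #|A|)%N ->
    #|A|%:R * (#|A|%:R - 1) / 2 - 3 * #|blue_edges_in col A|%:R
      <= 3 * red_share R col A.
  by move=> A2; apply: red_share_lower_bound A2 (binomial3_le_red_blue col A).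
have share_ge0 (A : {set T}) : 0 <= 3 * red_share R col A.
  by rewrite mulr_ge0 ?divr_ge0.
have := part_sizes_balanced X1_gt0 X2_gt0 (share_ge0 X1) (share_ge0 X2)
  (share_bound X1) (share_bound X2).
rewrite -card_T -/n -mulrDr -(blue_inside_disjoint col X12).
move=> /(_ (le_trans (red_shares_le_pack R col X12) hpack) hblue).
move=> /sqr_sub_le_sqrt /andP[lo hi].
have card_X2 : #|X2|%:R = n - #|X1|%:R by rewrite /n card_T natrD; lra.
by rewrite card_X2; split; apply/andP; split; lra.
Qed.
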